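(* Let $L_x,L_z>0$ and $\mathcal{A}=\{[x,0,z]^{\mathsf{T}}:|x|\le L_x/2,\ |z|\le L_z/2\}$. For $k\in\{1,2\}$ let $r_k>0$, $\phi_k,\theta_k\in[0,\pi]$, $\Phi_k=\cos\phi_k\sin\theta_k$, $\Psi_k=\sin\phi_k\sin\theta_k$, $\Theta_k=\cos\theta_k$, and assume $\Psi_k>0$. Let $k_0>0$ and $$\mathsf{Q}_k(x,z)=\frac{\sqrt{r_k\Psi_k}\,e^{-\mathrm{j}k_0(x^2+z^2-2r_k(\Phi_kx+\Theta_kz)+r_k^2)^{1/2}}}{\sqrt{4\pi}\,(x^2+z^2-2r_k(\Phi_kx+\Theta_kz)+r_k^2)^{3/4}},\qquad \mathsf{g}_k=\int_{-L_z/2}^{L_z/2}\int_{-L_x/2}^{L_x/2}|\mathsf{Q}_k(x,z)|^2\mathrm{d}x\,\mathrm{d}z.$$ Then $$\mathsf{g}_k=\frac{1}{4\pi}\sum_{x\in\mathcal{X}_k}\sum_{z\in\mathcal{Z}_k}\arctan\!\left(\frac{xz/\Psi_k}{\sqrt{\Psi_k^2+x^2+z^2}}\right)\triangleq\mathsf{g}_k^{\mathsf{p}},$$ where $\mathcal{X}_k=\{\frac{L_x}{2r_k}+\Phi_k,\frac{L_x}{2r_k}-\Phi_k\}$ and $\mathcal{Z}_k=\{\frac{L_z}{2r_k}+\Theta_k,\frac{L_z}{2r_k}-\Theta_k\}$. Moreover, approximating each one-dimensional integral in $\rho=\frac{1}{\sqrt{\mathsf{g}_1\mathsf{g}_2}}\int_{-L_z/2}^{L_z/2}\int_{-L_x/2}^{L_x/2}\mathsf{Q}_1^*(x,z)\mathsf{Q}_2(x,z)\mathrm{d}x\,\mathrm{d}z$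 by the $n$-point Chebyshev–Gauss quadrature rule $\int_{-1}^1 f(t)\mathrm{d}t\approx\frac{\pi}{n}\sum_{j=1}^n\sqrt{1-\psi_j^2}f(\psi_j)$, $\psi_j=\cos\frac{(2j-1)\pi}{2n}$, gives $$\rho\approx\frac{\pi^2A}{4n^2\sqrt{\mathsf{g}_1^{\mathsf{p}}\mathsf{g}_2^{\mathsf{p}}}}\sum_{j=1}^n\sum_{j'=1}^n\sqrt{(1-\psi_j^2)(1-\psi_{j'}^2)}\,\mathsf{Q}_1^*\Big(\tfrac{L_x\psi_j}{2},\tfrac{L_z\psi_{j'}}{2}\Big)\mathsf{Q}_2\Big(\tfrac{L_x\psi_j}{2},\tfrac{L_z\psi_{j'}}{2}\Big)\triangleq\rho_{\mathsf{p}},$$ with $A=L_xL_z$.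
   Context: This is the planar continuous-aperture array in the $x$-$z$ plane centred at the origin; user $k$ is located at $\mathbf{s}_k=r_k[\Phi_k,\Psi_k,\Theta_k]^{\mathsf{T}}$, and $\mathsf{Q}_k(x,z)=\mathsf{G}_k([x,0,z]^{\mathsf{T}})$ where $\mathsf{G}_k(\mathbf{r})=\frac{e^{-\mathrm{j}k_0\|\mathbf{r}-\mathbf{s}_k\|}}{\sqrt{4\pi}\|\mathbf{r}-\mathbf{s}_k\|}\sqrt{\frac{|\mathbf{e}^{\mathsf{T}}(\mathbf{s}_k-\mathbf{r})|}{\|\mathbf{r}-\mathbf{s}_k\|}}$ with normal $\mathbf{e}=[0,1,0]^{\mathsf{T}}$; $\mathsf{g}_k$ is the channel gain and $\rho$ the channel correlation factor; $n$ is a complexity-vs-accuracy parameter. *)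

From Stdlib Require Import Reals Lra List.
Import ListNotations.
From Coquelicot Require Import Coquelicot.
Open Scope R_scope.

Definition PhiC (phi theta : R) : R := cos phi * sin theta.
Definition PsiC (phi theta : R) : R := sin phi * sin theta.
Definition ThetaC (theta : R) : R := cos theta.

(* D_k(x,z) = x^2 + z^2 - 2 r (Phi x + Theta z) + r^2  (= ||[x,0,z] - s_k||^2) *)
Definition Dk (r phi theta x z : R) : R :=
  x ^ 2 + z ^ 2 - 2 * r * (PhiC phi theta * x + ThetaC theta * z) + r ^ 2.

(* Q_k(x,z) = sqrt(r Psi) e^{-j k0 D^{1/2}} / (sqrt(4 pi) D^{3/4}),
   with e^{-j a} written out as cos a - j sin a. *)
Definition Qk (k0 r phi theta x z : R) : C :=
  let D := Dk r phi theta x z in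
  let amp := sqrt (r * PsiC phi theta) / (sqrt (4 * PI) * Rpower D (3 / 4)) in
  (amp * cos (k0 * sqrt D), - (amp * sin (k0 * sqrt D)))%R.

Definition gk (Lx Lz k0 r phi theta : R) : R :=
  RInt (fun z => RInt (fun x => (Cmod (Qk k0 r phi theta x z)) ^ 2)
                      (- (Lx / 2)) (Lx / 2))
       (- (Lz / 2)) (Lz / 2).

(* Closed form g_k^p; the sums over X_k and Z_k are over the two listed
   values (counted with multiplicity). *)
Definition gp_term (Psi x z : R) : R :=
  atan ((x * z / Psi) / sqrt (Psi ^ 2 + x ^ 2 + z ^ 2)).

Definition gkp (Lx Lz r phi theta : R) : R :=
  let Ph := PhiC phi theta in
  let Ps := PsiC phi theta in
  let Th := ThetaC theta in
  let Xs := [Lx / (2 * r) + Ph; Lx / (2 * r) - Ph]%list in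
  let Zs := [Lz / (2 * r) + Th; Lz / (2 * r) - Th]%list in
  / (4 * PI) *
  fold_right Rplus 0
    (map (fun x => fold_right Rplus 0 (map (fun z => gp_term Ps x z) Zs)) Xs).

Fixpoint sumC (n : nat) (f : nat -> C) : C :=
  match n with
  | O => RtoC 0
  | S m => Cplus (sumC m f) (f (S m))
  end.

Definition cheb_node (n j : nat) : R :=
  cos ((2 * INR j - 1) * PI / (2 * INR n)).

Definition cg_rule (n : nat) (f : R -> C) : C :=
  Cmult (RtoC (PI / INR n))
    (sumC n (fun j => Cmult (RtoC (sqrt (1 - cheb_node n j ^ 2)))
                            (f (cheb_node n j)))).

(* Approximation of rho obtained by mapping each one-dimensional integral
   int_{-L/2}^{L/2} h(u) du = (L/2) int_{-1}^1 h(L t/2) dt to [-1,1] and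
   applying the n-point Chebyshev-Gauss rule (outer variable z, inner x). *)
Definition rho_quad (n : nat) (Lx Lz k0 r1 phi1 theta1 r2 phi2 theta2 : R) : C :=
  Cmult (RtoC (/ sqrt (gk Lx Lz k0 r1 phi1 theta1 * gk Lx Lz k0 r2 phi2 theta2)))
   (Cmult (RtoC (Lz / 2))
     (cg_rule n (fun s =>
        Cmult (RtoC (Lx / 2))
          (cg_rule n (fun t =>
             Cmult (Cconj (Qk k0 r1 phi1 theta1 (Lx * t / 2) (Lz * s / 2)))
                   (Qk k0 r2 phi2 theta2 (Lx * t / 2) (Lz * s / 2))))))).

Definition rho_p (n : nat) (Lx Lz k0 r1 phi1 theta1 r2 phi2 theta2 : R) : C :=
  Cmult (RtoC (PI ^ 2 * (Lx * Lz) /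
          (4 * INR n ^ 2 * sqrt (gkp Lx Lz r1 phi1 theta1 * gkp Lx Lz r2 phi2 theta2))))
   (sumC n (fun j => sumC n (fun j' =>
      Cmult (RtoC (sqrt ((1 - cheb_node n j ^ 2) * (1 - cheb_node n j' ^ 2))))
        (Cmult (Cconj (Qk k0 r1 phi1 theta1 (Lx * cheb_node n j / 2) (Lz * cheb_node n j' / 2)))
               (Qk k0 r2 phi2 theta2 (Lx * cheb_node n j / 2) (Lz * cheb_node n j' / 2)))))).

(* Because Phi^2 + Psi^2 + Theta^2 = 1, D_k(x,z) is the squared distance
   (x - r Phi)^2 + (z - r Theta)^2 + (r Psi)^2, so |Q_k|^2 = (r Psi / 4 pi) D_k^(-3/2).
   Integrating in x with the primitive (x - a) / (B sqrt ((x - a)^2 + B)) leaves a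
   z-integrand whose primitive is atan (U (z - b) / (c sqrt (U^2 + (z - b)^2 + c^2))) / c;
   this arctangent is homogeneous of degree 0, so dividing all lengths by r yields the
   four terms of g_k^p.  The identity for rho is bookkeeping: the nested Chebyshev-Gauss
   rule is a double sum with constant pi^2 A / (4 n^2) once g_k = g_k^p. *)

From Stdlib Require Import Reals Lra Lia.
From Coquelicot Require Import Coquelicot.
Open Scope R_scope.

Lemma Rpower_3_4_sqr (D : R) : 0 < D -> Rpower D (3 / 4) ^ 2 = D * sqrt D.
Proof.
intros HD.
rewrite <- Rsqr_pow2; unfold Rsqr.
rewrite <- Rpower_plus.
replace (3 / 4 + 3 / 4) with (1 + / 2) by field.
now rewrite Rpower_plus, Rpower_1, Rpower_sqrt.
Qed.

Lemma Cmod_polar_sqr (A t : R) : Cmod (A * cos t, - (A * sin t)) ^ 2 = A ^ 2.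
Proof.
unfold Cmod; simpl fst; simpl snd.
rewrite pow2_sqrt by nra.
pose proof (sin2_cos2 t) as Hpyth; unfold Rsqr in Hpyth.
transitivity (A ^ 2 * (sin t * sin t + cos t * cos t)); [ring|].
rewrite Hpyth; ring.
Qed.

Lemma direction_cosines_sqr (phi theta : R) :
  PhiC phi theta ^ 2 + PsiC phi theta ^ 2 + ThetaC theta ^ 2 = 1.
Proof.
unfold PhiC, PsiC, ThetaC.
pose proof (sin2_cos2 phi) as Hphi; pose proof (sin2_cos2 theta) as Htheta.
unfold Rsqr in Hphi, Htheta.
transitivity ((sin phi * sin phi + cos phi * cos phi) * sin theta ^ 2 + cos theta ^ 2); [ring|].
rewrite Hphi; lra.
Qed.

Lemma Dk_sum_sqr (r phi theta x z : R) :
  Dk r phi theta x z =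
  (x - r * PhiC phi theta) ^ 2 + ((z - r * ThetaC theta) ^ 2 + (r * PsiC phi theta) ^ 2).
Proof.
unfold Dk; pose proof (direction_cosines_sqr phi theta) as Hunit.
transitivity (x ^ 2 + z ^ 2 - 2 * r * (PhiC phi theta * x + ThetaC theta * z)
  + r ^ 2 * (PhiC phi theta ^ 2 + PsiC phi theta ^ 2 + ThetaC theta ^ 2)).
- rewrite Hunit; ring.
- ring.
Qed.

Lemma Cmod_Qk_sqr (k0 r phi theta x z : R) : 0 < r * PsiC phi theta ->
  Cmod (Qk k0 r phi theta x z) ^ 2 =
  r * PsiC phi theta / (4 * PI) /
  (((x - r * PhiC phi theta) ^ 2 + ((z - r * ThetaC theta) ^ 2 + (r * PsiC phi theta) ^ 2)) *
   sqrt ((x - r * PhiC phi theta) ^ 2 + ((z - r * ThetaC theta) ^ 2 + (r * PsiC phi theta) ^ 2))).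
Proof.
intros HrPs.
rewrite <- Dk_sum_sqr.
assert (HD : 0 < Dk r phi theta x z).
{ rewrite Dk_sum_sqr.
  pose proof (pow2_ge_0 (x - r * PhiC phi theta)); pose proof (pow2_ge_0 (z - r * ThetaC theta)).
  pose proof (pow_lt _ 2 HrPs); lra. }
unfold Qk; cbv zeta; rewrite Cmod_polar_sqr.
assert (H4PI : 0 < 4 * PI) by (pose proof PI_RGT_0; lra).
assert (HDpow : 0 < Rpower (Dk r phi theta x z) (3 / 4)) by apply exp_pos.
rewrite <- Rsqr_pow2, Rsqr_div', !Rsqr_mult, !Rsqr_sqrt by lra.
rewrite Rsqr_pow2, Rpower_3_4_sqr by lra.
pose proof (sqrt_lt_R0 _ HD); field; repeat split; lra.
Qed.

Lemma is_derive_inv_dist_cube_primitive (a B x : R) : 0 < B ->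
  is_derive (fun x => (x - a) / (B * sqrt ((x - a) ^ 2 + B))) x
    (/ (((x - a) ^ 2 + B) * sqrt ((x - a) ^ 2 + B))).
Proof.
intros HB.
assert (HQ : 0 < (x - a) ^ 2 + B) by (pose proof (pow2_ge_0 (x - a)); lra).
pose proof (sqrt_lt_R0 _ HQ) as HS.
auto_derive.
- replace ((x + - a) * ((x + - a) * 1) + B) with ((x - a) ^ 2 + B) by ring.
  repeat split; try lra; nra.
- replace ((x + - a) * ((x + - a) * 1) + B) with ((x - a) ^ 2 + B) by ring.
  replace (x + - a) with (x - a) by ring.
  pose proof (sqrt_sqrt _ (Rlt_le _ _ HQ)) as HSS.
  set (u := x - a) in *; clearbody u.
  revert HS HSS; generalize (sqrt (u ^ 2 + B)); intros S HS HSS.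
  assert (HBS : B = S * S - u ^ 2) by lra; subst B.
  field; repeat split; lra.
Qed.

Lemma is_derive_gp_term (c U b z : R) : 0 < c ->
  is_derive (fun z => gp_term c U (z - b) / c) z
    (U / (((z - b) ^ 2 + c ^ 2) * sqrt (U ^ 2 + ((z - b) ^ 2 + c ^ 2)))).
Proof.
intros Hc; unfold gp_term.
replace (U ^ 2 + ((z - b) ^ 2 + c ^ 2)) with (c ^ 2 + U ^ 2 + (z - b) ^ 2) by ring.
assert (HQ : 0 < c ^ 2 + U ^ 2 + (z - b) ^ 2)
  by (pose proof (pow2_ge_0 U); pose proof (pow2_ge_0 (z - b)); nra).
pose proof (sqrt_lt_R0 _ HQ) as HS.
auto_derive.
- replace (c * (c * 1) + U * (U * 1) + (z + - b) * ((z + - b) * 1))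
    with (c ^ 2 + U ^ 2 + (z - b) ^ 2) by ring.
  repeat split; lra.
- replace (c * (c * 1) + U * (U * 1) + (z + - b) * ((z + - b) * 1))
    with (c ^ 2 + U ^ 2 + (z - b) ^ 2) by ring.
  replace (z + - b) with (z - b) by ring.
  pose proof (sqrt_sqrt _ (Rlt_le _ _ HQ)) as HSS.
  set (v := z - b) in *; clearbody v.
  revert HS HSS; generalize (sqrt (c ^ 2 + U ^ 2 + v ^ 2)); intros S HS HSS.
  assert (Hden : 0 < c ^ 2 * (S * S) + U ^ 2 * v ^ 2)
    by (pose proof (pow2_ge_0 (U * v));
        pose proof (Rmult_lt_0_compat _ _ (pow_lt c 2 Hc) (Rmult_lt_0_compat _ _ HS HS)); nra).
  transitivity (U * (S * S - v ^ 2) / (S * (c ^ 2 * (S * S) + U ^ 2 * v ^ 2))).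
  + field; rewrite Rpow_mult_distr; repeat split; lra.
  + assert (Hcv : 0 < v ^ 2 + c ^ 2)
      by (pose proof (pow2_ge_0 v); pose proof (pow_lt c 2 Hc); lra).
    rewrite HSS in Hden |- *; field; lra.
Qed.

Lemma is_RInt_inv_dist_cube (a B x0 x1 : R) : 0 < B ->
  is_RInt (fun x => / (((x - a) ^ 2 + B) * sqrt ((x - a) ^ 2 + B))) x0 x1
    ((x1 - a) / (B * sqrt ((x1 - a) ^ 2 + B)) - (x0 - a) / (B * sqrt ((x0 - a) ^ 2 + B))).
Proof.
intros HB.
apply (is_RInt_derive (fun x => (x - a) / (B * sqrt ((x - a) ^ 2 + B)))).
- intros x _; exact (is_derive_inv_dist_cube_primitive a B x HB).
- intros x _.
  apply (ex_derive_continuous (fun x => / (((x - a) ^ 2 + B) * sqrt ((x - a) ^ 2 + B)))).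
  auto_derive.
  assert (HQ : 0 < (x + - a) * ((x + - a) * 1) + B)
    by (pose proof (pow2_ge_0 (x + - a)); simpl in *; lra).
  pose proof (sqrt_lt_R0 _ HQ).
  repeat split; [lra|]; apply Rgt_not_eq, Rmult_lt_0_compat; lra.
Qed.

Lemma RInt_rect_inv_dist_cube (K a b c x0 x1 z0 z1 : R) : 0 < c ->
  RInt (fun z => RInt (fun x =>
      K / (((x - a) ^ 2 + ((z - b) ^ 2 + c ^ 2)) * sqrt ((x - a) ^ 2 + ((z - b) ^ 2 + c ^ 2))))
    x0 x1) z0 z1 =
  K / c * (gp_term c (x1 - a) (z1 - b) - gp_term c (x1 - a) (z0 - b)
           - gp_term c (x0 - a) (z1 - b) + gp_term c (x0 - a) (z0 - b)).
Proof.
intros Hc.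
set (U0 := x0 - a); set (U1 := x1 - a).
assert (HB : forall z, 0 < (z - b) ^ 2 + c ^ 2)
  by (intro z; pose proof (pow2_ge_0 (z - b)); pose proof (pow_lt c 2 Hc); lra).
set (I z := K * (U1 / (((z - b) ^ 2 + c ^ 2) * sqrt (U1 ^ 2 + ((z - b) ^ 2 + c ^ 2)))
               - U0 / (((z - b) ^ 2 + c ^ 2) * sqrt (U0 ^ 2 + ((z - b) ^ 2 + c ^ 2))))).
assert (Hinner : forall z, RInt (fun x =>
      K / (((x - a) ^ 2 + ((z - b) ^ 2 + c ^ 2)) * sqrt ((x - a) ^ 2 + ((z - b) ^ 2 + c ^ 2))))
    x0 x1 = I z).
{ intro z; apply is_RInt_unique.
  exact (is_RInt_scal _ _ _ K _ (is_RInt_inv_dist_cube a _ x0 x1 (HB z))). }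
rewrite (RInt_ext _ I) by (intros z _; apply Hinner).
set (G z := K * (gp_term c U1 (z - b) / c - gp_term c U0 (z - b) / c)).
rewrite (is_RInt_unique I z0 z1 (minus (G z1) (G z0))).
- unfold minus, plus, opp, G; simpl; field; lra.
- apply (is_RInt_derive G).
  + intros z _; apply is_derive_scal.
    apply (is_derive_minus (fun z => gp_term c U1 (z - b) / c) (fun z => gp_term c U0 (z - b) / c));
      apply is_derive_gp_term, Hc.
  + intros z _; apply (ex_derive_continuous I); unfold I; auto_derive.
    pose proof (HB z) as HBz; simpl in HBz.
    assert (Hpos : forall U, 0 < U * (U * 1) + ((z + - b) * ((z + - b) * 1) + c * (c * 1)))
      by (intro U; pose proof (pow2_ge_0 U); simpl in *; lra).
    repeat split; try apply Hpos;
      apply Rgt_not_eq, Rmult_lt_0_compat; try lra; apply sqrt_lt_R0, Hpos.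
Qed.

Lemma gp_term_scale (r P u v : R) : 0 < r -> 0 < P ->
  gp_term (r * P) (r * u) (r * v) = gp_term P u v.
Proof.
intros Hr HP; unfold gp_term; f_equal.
replace ((r * P) ^ 2 + (r * u) ^ 2 + (r * v) ^ 2) with (r ^ 2 * (P ^ 2 + u ^ 2 + v ^ 2)) by ring.
assert (H0 : 0 < P ^ 2 + u ^ 2 + v ^ 2)
  by (pose proof (pow2_ge_0 u); pose proof (pow2_ge_0 v); pose proof (pow_lt P 2 HP); lra).
pose proof (sqrt_lt_R0 _ H0).
rewrite sqrt_mult, sqrt_pow2 by (try apply pow2_ge_0; lra).
field; lra.
Qed.

Lemma gp_term_oppl (P x z : R) : gp_term P (- x) z = - gp_term P x z.
Proof.
unfold gp_term; rewrite <- atan_opp; f_equal.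
replace ((- x) ^ 2) with (x ^ 2) by ring; unfold Rdiv; ring.
Qed.

Lemma gp_term_oppr (P x z : R) : gp_term P x (- z) = - gp_term P x z.
Proof.
unfold gp_term; rewrite <- atan_opp; f_equal.
replace ((- z) ^ 2) with (z ^ 2) by ring; unfold Rdiv; ring.
Qed.

Lemma gk_eq_gkp (Lx Lz k0 r phi theta : R) : 0 < r -> 0 < PsiC phi theta ->
  gk Lx Lz k0 r phi theta = gkp Lx Lz r phi theta.
Proof.
intros Hr HPs.
assert (HrPs : 0 < r * PsiC phi theta) by (apply Rmult_lt_0_compat; lra).
unfold gk.
rewrite (RInt_ext _ (fun z => RInt (fun x => _) _ _))
  by (intros z _; apply RInt_ext; intros x _; exact (Cmod_Qk_sqr k0 r phi theta x z HrPs)).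
rewrite RInt_rect_inv_dist_cube by exact HrPs.
unfold gkp; cbv zeta; simpl.
set (Ph := PhiC phi theta); set (Ps := PsiC phi theta) in *; set (Th := ThetaC theta).
replace (Lx / 2 - r * Ph) with (r * (Lx / (2 * r) - Ph)) by (field; lra).
replace (- (Lx / 2) - r * Ph) with (- (r * (Lx / (2 * r) + Ph))) by (field; lra).
replace (Lz / 2 - r * Th) with (r * (Lz / (2 * r) - Th)) by (field; lra).
replace (- (Lz / 2) - r * Th) with (- (r * (Lz / (2 * r) + Th))) by (field; lra).
rewrite !gp_term_oppl, !gp_term_oppr, !gp_term_scale by assumption.
pose proof PI_RGT_0; field; repeat split; lra.
Qed.

Lemma sumC_ext (n : nat) (f g : nat -> C) :
  (forall j, f j = g j) -> sumC n f = sumC n g.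
Proof. intros Hfg; induction n as [|n IH]; simpl; [reflexivity|]; now rewrite IH, Hfg. Qed.

Lemma sumC_scal (a : C) (n : nat) (f : nat -> C) :
  Cmult a (sumC n f) = sumC n (fun j => Cmult a (f j)).
Proof.
induction n as [|n IH]; simpl.
- now rewrite Cmult_0_r.
- now rewrite Cmult_plus_distr_l, IH.
Qed.

Lemma sumC_plus (n : nat) (f g : nat -> C) :
  sumC n (fun j => Cplus (f j) (g j)) = Cplus (sumC n f) (sumC n g).
Proof.
induction n as [|n IH]; simpl.
- now rewrite Cplus_0_l.
- rewrite IH; ring.
Qed.

Lemma sumC_swap (m n : nat) (F : nat -> nat -> C) :
  sumC m (fun j => sumC n (fun j' => F j j')) = sumC n (fun j' => sumC m (fun j => F j j')).
Proof.
induction m as [|m IH]; simpl.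
- induction n as [|n IHn]; simpl; [reflexivity|].
  now rewrite <- IHn, Cplus_0_l.
- now rewrite IH, sumC_plus.
Qed.

Lemma cheb_weight_nonneg (n j : nat) : 0 <= 1 - cheb_node n j ^ 2.
Proof.
unfold cheb_node.
pose proof (sin2_cos2 ((2 * INR j - 1) * PI / (2 * INR n))) as Hpyth; unfold Rsqr in Hpyth.
pose proof (pow2_ge_0 (sin ((2 * INR j - 1) * PI / (2 * INR n)))); simpl in *; lra.
Qed.

Lemma cg_rule_nested (n : nat) (c : R) (F : R -> R -> C) :
  cg_rule n (fun s => Cmult (RtoC c) (cg_rule n (fun t => F t s))) =
  Cmult (RtoC ((PI / INR n) ^ 2 * c))
    (sumC n (fun j => sumC n (fun j' =>
       Cmult (RtoC (sqrt ((1 - cheb_node n j ^ 2) * (1 - cheb_node n j' ^ 2))))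
             (F (cheb_node n j) (cheb_node n j'))))).
Proof.
unfold cg_rule.
rewrite sumC_swap, !sumC_scal; apply sumC_ext; intro j'.
rewrite !sumC_scal; apply sumC_ext; intro j.
rewrite sqrt_mult by apply cheb_weight_nonneg.
rewrite !RtoC_mult; simpl pow; rewrite !RtoC_mult; ring.
Qed.

Lemma rho_quad_eq_rho_p (n : nat) (Lx Lz k0 r1 phi1 theta1 r2 phi2 theta2 : R) : (0 < n)%nat ->
  gk Lx Lz k0 r1 phi1 theta1 = gkp Lx Lz r1 phi1 theta1 ->
  gk Lx Lz k0 r2 phi2 theta2 = gkp Lx Lz r2 phi2 theta2 ->
  rho_quad n Lx Lz k0 r1 phi1 theta1 r2 phi2 theta2 =
  rho_p n Lx Lz k0 r1 phi1 theta1 r2 phi2 theta2.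
Proof.
intros Hn Hg1 Hg2.
assert (HnR : INR n <> 0) by (apply not_0_INR; lia).
unfold rho_quad, rho_p; rewrite Hg1, Hg2.
rewrite (cg_rule_nested n (Lx / 2) (fun t s =>
  Cmult (Cconj (Qk k0 r1 phi1 theta1 (Lx * t / 2) (Lz * s / 2)))
        (Qk k0 r2 phi2 theta2 (Lx * t / 2) (Lz * s / 2)))).
rewrite !Cmult_assoc, <- !RtoC_mult; f_equal; f_equal.
set (s := sqrt (gkp Lx Lz r1 phi1 theta1 * gkp Lx Lz r2 phi2 theta2)).
(* [s] may vanish, so only its inverse is abstracted. *)
unfold Rdiv; rewrite (Rinv_mult (4 * INR n ^ 2) s).
generalize (/ s); intro w; field; exact HnR.
Qed.

Theorem lemma4 (Lx Lz k0 r1 phi1 theta1 r2 phi2 theta2 : R) (n : nat) :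
  0 < Lx -> 0 < Lz -> 0 < k0 ->
  0 < r1 -> 0 <= phi1 <= PI -> 0 <= theta1 <= PI -> 0 < PsiC phi1 theta1 ->
  0 < r2 -> 0 <= phi2 <= PI -> 0 <= theta2 <= PI -> 0 < PsiC phi2 theta2 ->
  (0 < n)%nat ->
  gk Lx Lz k0 r1 phi1 theta1 = gkp Lx Lz r1 phi1 theta1 /\
  gk Lx Lz k0 r2 phi2 theta2 = gkp Lx Lz r2 phi2 theta2 /\
  rho_quad n Lx Lz k0 r1 phi1 theta1 r2 phi2 theta2 =
  rho_p n Lx Lz k0 r1 phi1 theta1 r2 phi2 theta2.
Proof.
intros _ _ _ Hr1 _ _ HPs1 Hr2 _ _ HPs2 Hn.
pose proof (gk_eq_gkp Lx Lz k0 r1 phi1 theta1 Hr1 HPs1) as Hg1.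
pose proof (gk_eq_gkp Lx Lz k0 r2 phi2 theta2 Hr2 HPs2) as Hg2.
split; [exact Hg1|]; split; [exact Hg2|].
now apply rho_quad_eq_rho_p.
Qed.
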